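(* Let $\mathfrak s$ be a finite-dimensional real solvable Lie algebra such that $[\mathfrak s,\mathfrak s]$ has codimension $1$ in $\mathfrak s$. If $\mathfrak s$ admits an abelian complex structure, then $\mathfrak s$ is isomorphic to $\mathfrak{aff}(\mathbb R)$, the $2$-dimensional non-abelian Lie algebra (spanned by $x,y$ with $[x,y]=x$).
   Context: An abelian complex structure on a real Lie algebra $\mathfrak g$ is a linear map $J$ with $J^2=-\mathrm{Id}$ and $[Jx,Jy]=[x,y]$ for all $x,y\in\mathfrak g$. *)

From HB Require Import structures.
From mathcomp Require Import all_boot all_order all_algebra.
From mathcomp Require Import reals.
Set Implicit Arguments. Unset Strict Implicit. Unset Printing Implicit Defensive.
Import Order.TTheory GRing.Theory Num.Theory.
Local Open Scope ring_scope.


Section Lie.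
Variables (K : fieldType) (V : vectType K).

Definition is_lie_bracket (br : V -> V -> V) : Prop :=
  [/\ (forall (a : K) (x y z : V), br (a *: x + y) z = a *: br x z + br y z),
      (forall (a : K) (x y z : V), br x (a *: y + z) = a *: br x y + br x z),
      (forall x : V, br x x = 0) &
      (forall x y z : V, br x (br y z) + br y (br z x) + br z (br x y) = 0)].

(* [U,U] : the subspace spanned by all brackets [u,v], u,v in U.  By
   bilinearity it is spanned by the brackets of the basis vectors of U. *)
Definition derived (br : V -> V -> V) (U : {vspace V}) : {vspace V} :=
  (\sum_(i < \dim U) \sum_(j < \dim U)
      <[ br (vbasis U)`_i (vbasis U)`_j ]>)%VS.

Definition derived_series (br : V -> V -> V) (k : nat) : {vspace V} :=
  iter k (derived br) fullv%VS.

Definition solvable_lie (br : V -> V -> V) : Prop :=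
  exists k, derived_series br k = 0%VS.

Definition abelian_complex_structure (br : V -> V -> V) (J : V -> V) : Prop :=
  [/\ linear J, (forall x, J (J x) = - x) & (forall x y, br (J x) (J y) = br x y)].

Definition lie_isomorphic (W : vectType K) (br : V -> V -> V) (brW : W -> W -> W)
  : Prop :=
  exists f : V -> W, [/\ linear f, bijective f &
      forall x y, f (br x y) = brW (f x) (f y)].
End Lie.

(* aff(R): R^2 = span(x,y) with x = e_0, y = e_1 and [x,y] = x, i.e.
   [u,v] = (u_0 v_1 - u_1 v_0) x. *)
Definition aff_br (K : fieldType) (u v : 'rV[K]_2) : 'rV[K]_2 :=
  (u 0 0 * v 0 1 - u 0 1 * v 0 0) *: (delta_mx 0 0 : 'rV[K]_2).

(* An abelian complex structure J makes the i- and (-i)-eigenspaces of J in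
   the complexification two abelian subalgebras spanning it, so by Ito's
   argument the derived algebra g' is abelian.  Write g = g' + <a>.  As g' is
   abelian, g' = [a, g'], so ad a is injective on g'.  If z and J z both lie
   in g', writing J a = u + t a with u in g' gives [a, J z + t z] = 0, hence
   J z = - t z, impossible for a complex structure: g' and J g' meet trivially
   and dim g' <= 1.  dim g' = 0 would make a a real eigenvector of J, so
   g' = <x> with [x, a] = c x, c <> 0, and (x, a / c) is the standard basis of
   aff(R). *)
From HB Require Import structures.
From mathcomp Require Import all_boot all_order all_algebra ssrAC.
From mathcomp Require Import reals lra.
Set Implicit Arguments. Unset Strict Implicit. Unset Printing Implicit Defensive.
Import Order.TTheory GRing.Theory Num.Theory.
Local Open Scope ring_scope.

Section BiadditiveBracket.
Variables (W : zmodType) (c : W -> W -> W).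
Hypotheses (cDl : forall x y z, c (x + y) z = c x z + c y z)
  (cDr : forall x y z, c x (y + z) = c x y + c x z)
  (cC : forall x y, c x y = - c y x).

Let c0r x : c x 0 = 0.
Proof. by apply: (addrI (c x 0)); rewrite -cDr !addr0. Qed.
Let c0l x : c 0 x = 0.
Proof. by apply: (addrI (c 0 x)); rewrite -cDl !addr0. Qed.
Let cNr x y : c x (- y) = - c x y.
Proof. by apply: (addrI (c x y)); rewrite -cDr !subrr c0r. Qed.
Let cNl x y : c (- x) y = - c x y.
Proof. by apply: (addrI (c x y)); rewrite -cDl !subrr c0l. Qed.

Lemma jacobi_leibniz :
    (forall x y z, c x (c y z) + c y (c z x) + c z (c x y) = 0) ->
  forall x y z, c (c x y) z = c x (c y z) - c y (c x z).
Proof.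
move=> jacobi x y z; have := jacobi x y z.
rewrite (cC z (c x y)) (cC z x) cNr => /eqP.
by rewrite subr_eq0 eq_sym => /eqP.
Qed.

Hypothesis cL : forall x y z, c (c x y) z = c x (c y z) - c y (c x z).
Variables (A B : W -> Prop).
Hypotheses (abelianA : forall a a', A a -> A a' -> c a a' = 0)
  (abelianB : forall b b', B b -> B b' -> c b b' = 0)
  (sumAB : forall w, exists a b, [/\ A a, B b & w = a + b]).

(* Ito's argument: split [a2, b1] and [a1, b2] along A + B and expand with
   the Leibniz rule; the four resulting terms cancel in pairs. *)
Lemma bracket_metabelian a1 a2 b1 b2 : A a1 -> A a2 -> B b1 -> B b2 ->
  c (c a1 b1) (c a2 b2) = 0.
Proof.
move=> Aa1 Aa2 Bb1 Bb2.
have [wA [wB [AwA BwB Hw]]] := sumAB (c a2 b1).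
have [vA [vB [AvA BvB Hv]]] := sumAB (c a1 b2).
have h1 : c b1 (c a2 b2) = c b2 wA.
  have := cL b1 a2 b2; rewrite (abelianB Bb1 Bb2) c0r subr0 => <-.
  by rewrite (cC b1 a2) Hw cNl cDl (cC wB b2) (abelianB Bb2 BwB) oppr0 addr0 (cC wA b2) opprK.
have h2 : c a1 (c b2 wA) = c vB wA.
  have := cL a1 b2 wA; rewrite (abelianA Aa1 AwA) c0r subr0 => <-.
  by rewrite Hv cDl (abelianA AvA AwA) add0r.
have h3 : c a1 (c a2 b2) = c a2 vB.
  have := cL a1 a2 b2; rewrite (abelianA Aa1 Aa2) c0l => /eqP; rewrite eq_sym subr_eq0 => /eqP ->.
  by rewrite Hv cDr (abelianA Aa2 AvA) add0r.
have h4 : c b1 (c a2 vB) = - c wA vB.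
  have := cL b1 a2 vB; rewrite (abelianB Bb1 BvB) c0r subr0 => <-.
  by rewrite (cC b1 a2) Hw cNl cDl (abelianB BwB BvB) addr0.
by rewrite cL h1 h2 h3 h4 opprK (cC wA vB) subrr.
Qed.

End BiadditiveBracket.

Lemma complex_structure_no_eigenvector (R : realFieldType) (V : lmodType R)
    (J : {linear V -> V}) : (forall x, J (J x) = - x) ->
  forall z s, J z = s *: z -> z = 0.
Proof.
move=> JJ z s Jz; have := JJ z; rewrite Jz linearZ /= Jz scalerA => /eqP.
rewrite -subr_eq0 opprK -{2}(scale1r z) -scalerDl scaler_eq0 => /orP [|/eqP //].
by rewrite gt_eqF //; nra.
Qed.

Section LieAlgebra.
Variables (R : realFieldType) (V : vectType R) (br : V -> V -> V).
Hypothesis lieV : is_lie_bracket br.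

Definition brl z x := br x z.
Definition brr x z := br x z.
Lemma brl_linear z : linear (brl z).
Proof. by case: lieV => H _ _ _ a x y; rewrite /brl H. Qed.
Lemma brr_linear x : linear (brr x).
Proof. by case: lieV => _ H _ _ a y z; rewrite /brr H. Qed.
HB.instance Definition _ z := GRing.isLinear.Build R V V *:%R (brl z) (brl_linear z).
HB.instance Definition _ x := GRing.isLinear.Build R V V *:%R (brr x) (brr_linear x).

Lemma brDl x y z : br (x + y) z = br x z + br y z. Proof. exact: (linearD (brl z)). Qed.
Lemma brDr x y z : br x (y + z) = br x y + br x z. Proof. exact: (linearD (brr x)). Qed.
Lemma brBr x y z : br x (y - z) = br x y - br x z. Proof. exact: (linearB (brr x)). Qed.
Lemma brNl x z : br (- x) z = - br x z. Proof. exact: (linearN (brl z)). Qed.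
Lemma brNr x z : br x (- z) = - br x z. Proof. exact: (linearN (brr x)). Qed.
Lemma brZl a x z : br (a *: x) z = a *: br x z. Proof. exact: (linearZ_LR (brl z)). Qed.
Lemma brZr a x z : br x (a *: z) = a *: br x z. Proof. exact: (linearZ_LR (brr x)). Qed.
Lemma brMnl x y m : br (x *+ m) y = br x y *+ m. Proof. exact: (linearMn (brl y)). Qed.
Lemma brMnr x y m : br x (y *+ m) = br x y *+ m. Proof. exact: (linearMn (brr x)). Qed.
Lemma brxx x : br x x = 0. Proof. by case: lieV. Qed.
Lemma brC x y : br x y = - br y x.
Proof.
have := brxx (x + y); rewrite brDl !brDr !brxx add0r addr0 => /eqP.
by rewrite addr_eq0 => /eqP.
Qed.
Lemma br_jacobi x y z : br x (br y z) + br y (br z x) + br z (br x y) = 0.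
Proof. by case: lieV. Qed.

Local Notation g' := (derived br fullv).

Lemma memv_derived x y : br x y \in g'.
Proof.
rewrite (coord_vbasis (memvf x)) (coord_vbasis (memvf y)).
rewrite -[br _ _]/(brl _ _) linear_sum; apply: rpred_sum => i _ /=.
rewrite /brl -[br _ _]/(brr _ _) linear_sum; apply: rpred_sum => j _ /=.
rewrite /brr brZl brZr; do 2 apply: rpredZ.
by apply: (sumv_sup i) => //; apply: (sumv_sup j).
Qed.

Lemma derived_subv (U : {vspace V}) : (forall x y, br x y \in U) -> (g' <= U)%VS.
Proof. by move=> brU; apply/subv_sumP => i _; apply/subv_sumP => j _; rewrite -memvE. Qed.

(* [(p, q)] stands for [p + i q] in the complexification of [V]. *)
Definition cbr (x y : V * V) : V * V :=
  (br x.1 y.1 - br x.2 y.2, br x.1 y.2 + br x.2 y.1).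

Lemma cbrDl x y z : cbr (x + y) z = cbr x z + cbr y z.
Proof.
case: x y z => [p q] [r s] [u w]; rewrite /cbr /= !brDl.
by congr (_, _); rewrite /= ?opprD addrACA.
Qed.

Lemma cbrDr x y z : cbr x (y + z) = cbr x y + cbr x z.
Proof.
case: x y z => [p q] [r s] [u w]; rewrite /cbr /= !brDr.
by congr (_, _); rewrite /= ?opprD addrACA.
Qed.

Lemma cbrC x y : cbr x y = - cbr y x.
Proof.
case: x y => [p q] [r s]; rewrite /cbr /=.
congr (_, _) => /=; first by rewrite (brC p r) (brC q s) opprK opprB addrC.
by rewrite (brC p s) (brC q r) opprD addrC.
Qed.

Lemma cbr_jacobi x y z : cbr x (cbr y z) + cbr y (cbr z x) + cbr z (cbr x y) = 0.
Proof.
case: x y z => [p q] [r s] [u w]; rewrite /cbr /=.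
congr (_, _); rewrite /= ?brDr ?brBr ?brNr ?opprD ?addrA.
  transitivity ((br p (br r u) + br r (br u p) + br u (br p r))
    - (br p (br s w) + br s (br w p) + br w (br p s))
    - (br q (br r w) + br r (br w q) + br w (br q r))
    - (br q (br s u) + br s (br u q) + br u (br q s))); last by rewrite !br_jacobi !subr0.
  by rewrite !opprD !addrA [LHS](ACl (1*5*9*2*8*11*3*6*12*4*7*10)).
transitivity ((br p (br r w) + br r (br w p) + br w (br p r))
    + (br p (br s u) + br s (br u p) + br u (br p s))
    + (br q (br r u) + br r (br u q) + br u (br q r))
    - (br q (br s w) + br s (br w q) + br w (br q s))); last by rewrite !br_jacobi !addr0 subr0.
by rewrite !opprD !addrA [LHS](ACl (1*6*11*2*7*9*3*5*10*4*8*12)).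
Qed.

Lemma aff_isomorphic x y : basis_of fullv [tuple x; y] -> br x y = x ->
  lie_isomorphic br (@aff_br R).
Proof.
move=> basisxy brxy; have freexy := basis_free basisxy.
pose X := [tuple x; y].
have coordE v : v = coord X 0 v *: x + coord X 1 v *: y.
  rewrite {1}(coord_basis basisxy (memvf v)) !big_ord_recl big_ord0 addr0 /=.
  by congr (coord X _ v *: _ + coord X _ v *: _); apply: val_inj.
have coord_x j : coord X j x = (j == 0)%:R by rewrite (coord_free 0 j freexy) eq_sym.
have coord_y j : coord X j y = (j == 1)%:R by rewrite (coord_free 1 j freexy) eq_sym.
pose f v : 'rV[R]_2 := \row_j coord X j v.
have f_linear : linear f by move=> k u v; apply/rowP => j; rewrite !mxE linearP.
have br_comb al be ga de :
    br (al *: x + be *: y) (ga *: x + de *: y) = (al * de - be * ga) *: x.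
  rewrite brDl !brDr !brZl !brZr !brxx (brC y x) brxy !scaler0 add0r addr0.
  by rewrite !scalerA scalerN -scaleNr -scalerDl.
exists f; split => //.
- exists (fun r : 'rV[R]_2 => r 0 0 *: x + r 0 1 *: y); first by move=> v; rewrite !mxE -coordE.
  move=> r; apply/rowP => j; rewrite !mxE linearD !linearZ /= coord_x coord_y.
  by case: j => [[|[|//]] ?]; rewrite /= ?mulr1 ?mulr0 ?addr0 ?add0r; congr (_ _ _); apply: val_inj.
- move=> u v; rewrite {1}(coordE u) {1}(coordE v) br_comb.
  apply/rowP => j; rewrite /aff_br !mxE linearZ /= coord_x.
  by case: j => [[|[|//]] ?]; rewrite /= ?mulr1 ?mulr0.
Qed.

Section AbelianComplexStructure.
Variable J : {linear V -> V}.
Hypotheses (JJ : forall x, J (J x) = - x)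
  (brJJ : forall x y, br (J x) (J y) = br x y).

Lemma brJl x y : br (J x) y = - br x (J y).
Proof. by rewrite -(brJJ x (J y)) JJ brNr opprK. Qed.

(* [hol x] and [antihol y] are [x - i J x] and [y + i J y]: they span the
   [i]- and [-i]-eigenspaces of [J] in the complexification, both abelian. *)
Definition hol x : V * V := (x, - J x).
Definition antihol y : V * V := (y, J y).

Lemma cbr_hol x z : cbr (hol x) (hol z) = 0.
Proof.
rewrite /cbr /=; congr (_, _) => /=; first by rewrite brNl brNr opprK brJJ subrr.
by rewrite brNl brNr brJl opprK addNr.
Qed.

Lemma cbr_antihol x z : cbr (antihol x) (antihol z) = 0.
Proof. by rewrite /cbr /=; congr (_, _) => /=; rewrite ?brJJ ?subrr // brJl addrN. Qed.

Lemma hol_antihol_decomp w :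
  exists a b, [/\ exists x, a = hol x, exists y, b = antihol y & w = a + b].
Proof.
have half (v : V) : (2 : R)^-1 *: (v + v) = v.
  by rewrite -mulr2n -scaler_nat scalerA mulVf ?scale1r // pnatr_eq0.
case: w => [w1 w2].
exists (hol ((2 : R)^-1 *: (w1 + J w2))), (antihol ((2 : R)^-1 *: (w1 - J w2))).
split; [by eexists | by eexists | rewrite /hol /antihol; congr (_, _) => /=].
  by rewrite -scalerDr addrACA subrr addr0 half.
rewrite !linearZ /= !linearD /= linearN /= !JJ opprK linearN /= JJ opprK.
by rewrite addrACA addNr add0r -scalerDr half.
Qed.

Lemma cbr_hol_antihol x y : cbr (hol x) (antihol y) = (br x y *+ 2, br x (J y) *+ 2).
Proof.
rewrite /hol /antihol /cbr /=; congr (_, _).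
  by rewrite brNl opprK brJJ mulr2n.
by rewrite brNl brJl opprK mulr2n.
Qed.

Lemma derived_brackets_commute x1 y1 x2 y2 : br (br x1 y1) (br x2 y2) = 0.
Proof.
have mulrSn_eq0 (v : V) m : v *+ m.+1 = 0 -> v = 0.
  by move=> /eqP; rewrite -scaler_nat scaler_eq0 pnatr_eq0 => /eqP.
have ito x y x' y' : cbr (cbr (hol x) (antihol y)) (cbr (hol x') (antihol y')) = 0.
  apply: (bracket_metabelian cbrDl cbrDr cbrC (jacobi_leibniz cbrDr cbrC cbr_jacobi)
    _ _ hol_antihol_decomp); try by eexists.
    by move=> _ _ [a ->] [b ->]; apply: cbr_hol.
  by move=> _ _ [a ->] [b ->]; apply: cbr_antihol.
have := ito x1 y1 x2 y2; have := ito x1 y1 y2 x2.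
rewrite !cbr_hol_antihol /cbr /= !brMnl !brMnr -!mulrnA -!mulrnBl.
move=> [/mulrSn_eq0 E2 _] [/mulrSn_eq0 /eqP]; rewrite subr_eq0 => /eqP E1 _.
rewrite (brC y2 x2) (brC y2 (J x2)) brJl opprK brNr -E1 -opprD -mulr2n in E2.
by apply: (mulrSn_eq0 _ 1); rewrite -[LHS]opprK E2 oppr0.
Qed.

Lemma derived_abelian u v : u \in g' -> v \in g' -> br u v = 0.
Proof.
move=> g'u g'v; have: (g' <= lker (linfun (brr u)))%VS.
  apply: derived_subv => x y; rewrite memv_ker lfunE /= /brr.
  have: (g' <= lker (linfun (brl (br x y))))%VS.
    by apply: derived_subv => a b; rewrite memv_ker lfunE /= /brl derived_brackets_commute.
  by move/subvP/(_ u g'u); rewrite memv_ker lfunE.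
by move/subvP/(_ v g'v); rewrite memv_ker lfunE => /eqP.
Qed.

Section CodimensionOne.
Hypothesis dim_derived : (\dim g').+1 = \dim (fullv : {vspace V}).

Let a := vpick (g'^C)%VS.

Let dim_compl : \dim (g'^C)%VS = 1%N.
Proof. by rewrite dimv_compl -dim_derived subSnn. Qed.

Let a_neq0 : a != 0.
Proof. by rewrite vpick0 -dimv_eq0 dim_compl. Qed.

Let compl_line : (g'^C)%VS = <[a]>%VS.
Proof.
apply/eqP; rewrite eq_sym eqEdim dim_vline a_neq0 dim_compl leqnn andbT -memvE.
exact: memv_pick.
Qed.

Lemma derived_decomp v : exists u k, u \in g' /\ v = u + k *: a.
Proof.
have : v \in (g' + g'^C)%VS by rewrite addv_complf memvf.
by case/memv_addP => u g'u [w]; rewrite compl_line => /vlineP [k ->] ->; exists u, k.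
Qed.

Lemma derived_ad_inj z : z \in g' -> br a z = 0 -> z = 0.
Proof.
pose ad := linfun (brr a).
have g'_img : (g' <= ad @: g')%VS.
  apply: derived_subv => v w; apply/memv_imgP.
  have [u [k [g'u ->]]] := derived_decomp v; have [u' [k' [g'u' ->]]] := derived_decomp w.
  exists (k *: u' - k' *: u); first by rewrite rpredB // rpredZ.
  rewrite lfunE /= /brr brBr !brZr brDl !brDr !brZl !brZr (derived_abelian g'u g'u').
  by rewrite brxx (brC u a) !scaler0 add0r addr0 scalerN addrC.
have ker0 : (g' :&: lker ad = 0)%VS.
  apply/eqP; rewrite -dimv_eq0 -leqn0 -(leq_add2r (\dim (ad @: g'))) add0n.
  by rewrite limg_ker_dim dimvS.
move=> g'z adz; have : z \in (g' :&: lker ad)%VS.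
  by rewrite memv_cap g'z memv_ker lfunE /= /brr adz eqxx.
by rewrite ker0 memv0 => /eqP.
Qed.

Lemma derived_cap_J z : z \in g' -> J z \in g' -> z = 0.
Proof.
move=> g'z g'Jz; have [u [t [g'u Ja]]] := derived_decomp (J a).
have brJa : br (J a) z = t *: br a z by rewrite Ja brDl brZl (derived_abelian g'u g'z) add0r.
apply: (complex_structure_no_eigenvector JJ (s := - t)); apply/eqP.
rewrite scaleNr -addr_eq0; apply/eqP; apply: derived_ad_inj.
  by rewrite rpredD // rpredZ.
by rewrite brDr brZr -brJa brJl addrN.
Qed.

Lemma dim_derived_eq1 : \dim g' = 1%N.
Proof.
pose Jg' := (linfun J @: g')%VS.
have cap0 : (g' :&: Jg' = 0)%VS.
  apply/vspaceP => z; rewrite memv_cap memv0; apply/andP/eqP => [[]|->]; last by rewrite !rpred0.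
  move=> g'z /memv_imgP [y g'y zJy]; rewrite zJy lfunE /= in g'z *.
  by rewrite (derived_cap_J g'z) // JJ rpredN.
have dimJg' : \dim Jg' = \dim g'.
  apply: limg_dim_eq; apply/vspaceP => v; rewrite memv_cap memv_ker lfunE memv0 /=.
  apply/andP/eqP => [[_ /eqP Jv]|->]; last by rewrite rpred0 linear0.
  by apply/eqP; rewrite -oppr_eq0 -JJ Jv linear0.
have le1 : (\dim g' <= 1)%N.
  have := dimv_sum_cap g' Jg'; rewrite cap0 dimv0 addn0 dimJg' => dim_sum.
  by have := dimvS (subvf (g' + Jg')); rewrite dim_sum -dim_derived -addn1 leq_add2l.
apply/eqP; rewrite eqn_leq le1 lt0n dimv_eq0; apply: contraNneq a_neq0 => g'0.
have [u [t [g'u Ja]]] := derived_decomp (J a).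
move: g'u; rewrite g'0 memv0 => /eqP u0; rewrite u0 add0r in Ja.
by rewrite (complex_structure_no_eigenvector JJ Ja).
Qed.

Lemma exists_aff_basis : exists x y, basis_of fullv [tuple x; y] /\ br x y = x.
Proof.
pose x := vpick g'.
have g'x : x \in g' by apply: memv_pick.
have x_neq0 : x != 0 by rewrite vpick0 -dimv_eq0 dim_derived_eq1.
have g'_line : g' = <[x]>%VS.
  apply/eqP; rewrite eq_sym eqEdim dim_vline x_neq0 dim_derived_eq1 leqnn andbT -memvE.
  exact: g'x.
have [c brxa] : exists c, br x a = c *: x.
  by have := memv_derived x a; rewrite g'_line => /vlineP.
have c_neq0 : c != 0.
  apply: contraNneq x_neq0 => c0; apply/eqP; apply: derived_ad_inj g'x _.
  by rewrite brC brxa c0 scale0r oppr0.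
exists x, (c^-1 *: a); split; last by rewrite brZr brxa scalerA mulVf ?scale1r.
rewrite basisEdim [size _]/= -dim_derived dim_derived_eq1 leqnn andbT.
apply/subvP => v _; have [u [k [g'u ->]]] := derived_decomp v.
move: g'u; rewrite g'_line => /vlineP [al ->].
rewrite -[k](mulfK c_neq0) -scalerA rpredD // rpredZ // memv_span // !inE eqxx ?orbT //.
Qed.

End CodimensionOne.
End AbelianComplexStructure.
End LieAlgebra.

Theorem mainTheorem13 (R : realType) (V : vectType R) (br : V -> V -> V) :
  is_lie_bracket br ->
  solvable_lie br ->
  (\dim (derived br fullv%VS)).+1 = \dim (fullv : {vspace V}) ->
  (exists J : V -> V, abelian_complex_structure br J) ->
  lie_isomorphic br (@aff_br R).
Proof.
move=> lieV _ dim_derived [J [J_linear JJ brJJ]].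
pose Jl : {linear V -> V} := HB.pack J (GRing.isLinear.Build R V V *:%R J J_linear).
have [x [y [basisxy brxy]]] := exists_aff_basis lieV (J := Jl) JJ brJJ dim_derived.
exact: aff_isomorphic basisxy brxy.
Qed.
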